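(* Let $q\ge2$, $d\ge1$ be integers, let $f\colon\mathbb{N}_0\to\mathbb{U}$ be $q$-multiplicative and let $c>0$. Then the estimate $$\sup_{p\in\mathbb{R}[x],\ \deg p\le d}\Big|\frac{1}{q^L}\sum_{n=0}^{q^L-1}f(n)e(p(n))\Big|\ll q^{-cL}\qquad(L\ge0)$$ holds if and only if $$\sup_{M\ge0}\ \sup_{p\in\mathbb{R}[x],\ \deg p\le d}\Big|\frac1N\sum_{n=0}^{N-1}f(n+M)e(p(n))\Big|\ll N^{-c}\qquad(N\ge1).$$
   Context: $\mathbb{N}_0=\{0,1,\dots\}$, $\mathbb{U}=\{z\in\mathbb{C}:|z|=1\}$, $e(t)=e^{2\pi i t}$. $f$ is $q$-multiplicative if $f(m+n)=f(m)f(n)$ whenever $t,m,n\ge0$, $m<q^t$, $q^t\mid n$. $X\ll Y$ means $|X|\le CY$ for a constant $C$ independent of $L$, $N$, $M$, $p$. *)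

From HB Require Import structures.
From mathcomp Require Import all_boot all_order all_algebra.
From mathcomp Require Import all_classical all_reals all_analysis.
From mathcomp Require Import complex.
Set Implicit Arguments. Unset Strict Implicit. Unset Printing Implicit Defensive.
Import Order.TTheory GRing.Theory Num.Theory.
Local Open Scope ring_scope.

Definition cmod {R : realType} (z : R[i]) : R := ComplexField.Normc.normc z.

Definition e {R : realType} (t : R) : R[i] :=
  (cos (2 * pi * t) +i* sin (2 * pi * t))%C.

Definition unimodular {R : realType} (f : nat -> R[i]) : Prop :=
  forall n, cmod (f n) = 1.

Definition q_multiplicative {R : realType} (q : nat) (f : nat -> R[i]) : Prop :=
  forall t m n : nat, (m < q ^ t)%N -> (q ^ t %| n)%N -> f (m + n)%N = f m * f n.

Definition avg_sum {R : realType} (f : nat -> R[i]) (M N : nat) (p : {poly R}) : R[i] :=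
  (N%:R)^-1 * \sum_(n < N) f (n + M)%N * e p.[n%:R].

(* The converse implication is the case M = 0, N = q^L.  For the direct one put
   x = q^(1-c).  By q-multiplicativity the sum over an aligned block
   [a q^k, (a+1) q^k) is a unimodular multiple of the sum over [0, q^k), so its
   modulus is at most C x^k.  A sum of length r <= q^(k+1) starting at a multiple
   of q^(k+1) splits into at most q aligned blocks of length q^k and a shorter
   aligned remainder; by induction on k it is at most E x^k as soon as
   E (x - 1) >= q C, which requires x > 1, i.e. c < 1.  That c < 1 is forced by
   Parseval's identity for the linear phases j n / N: one of them makes the sum
   over [0, N) at least sqrt N in modulus.  Finally, if q^k <= N < q^(k+1), the
   sum over [M, M + N) is a difference of two sums starting at the multiple
   q^k (M div q^k), hence O(x^k) = O(N^(1-c)). *)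

From HB Require Import structures.
From mathcomp Require Import all_boot all_order all_algebra.
From mathcomp Require Import all_classical all_reals all_analysis.
From mathcomp Require Import complex.
From mathcomp Require Import ring lra zify.
Import Order.TTheory GRing.Theory Num.Theory.
Local Open Scope ring_scope.
Local Open Scope complex_scope.

Section ComplexModulus.
Context {R : realType}.
Implicit Types z w : R[i].

Lemma cmodE z : (cmod z)%:C = `|z|.
Proof. by case: z. Qed.

Lemma cmod_ge0 z : 0 <= cmod z.
Proof. by case: z => a b; rewrite /cmod /= sqrtr_ge0. Qed.

Lemma cmod0 : cmod (0 : R[i]) = 0.
Proof. exact: ComplexField.Normc.normc0. Qed.

Lemma cmodN z : cmod (- z) = cmod z.
Proof. exact: normcN. Qed.

Lemma cmodD z w : cmod (z + w) <= cmod z + cmod w.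
Proof. exact: le_normcD. Qed.

Lemma cmodM z w : cmod (z * w) = cmod z * cmod w.
Proof. exact: ComplexField.Normc.normcM. Qed.

Lemma cmod_sum (I : Type) (r : seq I) (P : pred I) (F : I -> R[i]) :
  cmod (\sum_(i <- r | P i) F i) <= \sum_(i <- r | P i) cmod (F i).
Proof. exact: (@ler_norm_sum R (Rcomplex R)). Qed.

Lemma cmod_real (r : R) : 0 <= r -> cmod r%:C = r.
Proof. by move=> r0; rewrite /cmod /= expr0n /= addr0 sqrtr_sqr ger0_norm. Qed.

Lemma conjcM z w : conjc (z * w) = conjc z * conjc w.
Proof. exact: rmorphM. Qed.

Lemma cmod_sqr z : (cmod z ^+ 2)%:C = z * conjc z.
Proof. by rewrite rmorphXn /= cmodE sqr_normc. Qed.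

End ComplexModulus.

Section UnitExponential.
Context {R : realType}.
Implicit Types s t : R.

Lemma eD s t : e (s + t) = e s * e t.
Proof. by rewrite /e mulrDr cosD sinD; simpc; congr (_ +i* _); rewrite addrC. Qed.

Lemma e0 : e (0 : R) = 1.
Proof. by rewrite /e mulr0 cos0 sin0. Qed.

Lemma e_natmul (n : nat) t : e (n%:R * t) = e t ^+ n.
Proof.
elim: n => [|n IHn]; first by rewrite mul0r e0 expr0.
by rewrite -addn1 natrD mulrDl mul1r eD IHn exprD expr1.
Qed.

Lemma e_nat (n : nat) : e (n%:R : R) = 1.
Proof.
have e1 : e (1 : R) = 1 by rewrite /e mulr1 mulr_natl cos2pi sin2pi.
by rewrite -[n%:R]mulr1 e_natmul e1 expr1n.
Qed.

Lemma cmod_e t : cmod (e t) = 1.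
Proof. by rewrite /cmod /e /= cos2Dsin2 sqrtr1. Qed.

Lemma conj_e t : conjc (e t) = e (- t).
Proof. by rewrite /e mulrN cosN sinN. Qed.

Lemma e_neq1 t : -1 < t < 1 -> t != 0 -> e t != 1.
Proof.
wlog t_gt0 : t / 0 < t.
  move=> wlog_t /andP[tN1 t1] t0; have [|t_le0] := ltP 0 t.
    by move=> t_gt0; apply: wlog_t => //; rewrite tN1 t1.
  have -> : e t = e (t + 1) by rewrite eD (e_nat 1) mulr1.
  by apply: wlog_t; rewrite ?lt_neqAle; lra.
move=> /andP[_ t1] _; apply/eqP => -[cos1 _].
have pit : 0 < pi * t < pi.
  by rewrite mulr_gt0 ?pi_gt0 //= -[X in _ < X]mulr1 ltr_pM2l ?pi_gt0.
suff : sin (pi * t) = 0 by have := sin_gt0_pi pit; move=> /gt_eqF/eqP.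
have : cos (pi * t) ^+ 2 = 1.
  move: cos1; rewrite -mulrA mulr_natl mulr2n -mulr2n cos_mulr2n; lra.
by move/eqP; rewrite -subr_eq0 -[_ - 1]opprB -sin2cos2 oppr_eq0 sqrf_eq0 => /eqP.
Qed.

Lemma sum_e_orthogonal (N n m : nat) : (n < N)%N -> (m < N)%N ->
  \sum_(j < N) e (j%:R * ((n%:R - m%:R) / N%:R) : R) = (n == m)%:R * N%:R.
Proof.
move=> nN mN; have N_gt0 : (0 : R) < N%:R by rewrite ltr0n (leq_ltn_trans _ nN).
have [->|nm] := eqVneq n m.
  under eq_bigr do rewrite subrr mul0r mulr0 e0.
  by rewrite sumr_const card_ord mul1r.
rewrite mul0r; under eq_bigr do rewrite e_natmul.
set u := e _.
have uN : u ^+ N = 1.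
  by rewrite -e_natmul mulrC divfK ?gt_eqF // eD e_nat -conj_e e_nat conjc1 mul1r.
have u1 : u - 1 != 0.
  rewrite subr_eq0 e_neq1 //; last first.
    by rewrite mulf_eq0 invr_eq0 (gt_eqF N_gt0) orbF subr_eq0 eqr_nat.
  have : (n%:R : R) < N%:R by rewrite ltr_nat.
  have : (m%:R : R) < N%:R by rewrite ltr_nat.
  rewrite ltr_pdivrMr // ltr_pdivlMr // mulN1r mul1r.
  have : (0 : R) <= n%:R by []; have : (0 : R) <= m%:R by [].
  lra.
by apply: (mulfI u1); rewrite mulr0 -subrX1 uN subrr.
Qed.

End UnitExponential.

Section DiscreteFourier.
Context {R : realType}.
Variables (N : nat) (x : nat -> R[i]).

Let dft (j : nat) := \sum_(n < N) x n * e (j%:R / N%:R * n%:R : R).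

Lemma parseval_dft :
  \sum_(j < N) cmod (dft j) ^+ 2 = N%:R * \sum_(n < N) cmod (x n) ^+ 2.
Proof.
apply: complexI; rewrite rmorphM rmorph_nat !rmorph_sum /=.
under eq_bigr do rewrite cmod_sqr /dft rmorph_sum mulr_suml.
under eq_bigr do under eq_bigr do rewrite mulr_sumr.
have phase (j n m : 'I_N) :
    x n * e (j%:R / N%:R * n%:R) * conjc (x m * e (j%:R / N%:R * m%:R))
    = x n * conjc (x m) * e (j%:R * ((n%:R - m%:R) / N%:R)).
  have -> : (j%:R * ((n%:R - m%:R) / N%:R) : R) =
            j%:R / N%:R * n%:R + - (j%:R / N%:R * m%:R) by ring.
  by rewrite eD conjcM conj_e; ring.
under eq_bigr do under eq_bigr do under eq_bigr do rewrite phase.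
rewrite exchange_big /=; under eq_bigr do rewrite exchange_big /=.
rewrite mulr_sumr; apply: eq_bigr => n _.
under eq_bigr do rewrite -mulr_sumr sum_e_orthogonal //.
rewrite (bigD1 n) //= big1 => [|m nm]; last by rewrite val_eqE eq_sym (negbTE nm) !mul0r mulr0.
by rewrite eqxx addr0 mul1r -cmod_sqr mulrC.
Qed.

Lemma exists_large_dft : (0 < N)%N -> (forall n, cmod (x n) = 1) ->
  exists j : nat, (N%:R : R) <= cmod (dft j) ^+ 2.
Proof.
move=> N_gt0 x_unit.
have [[j Hj]|small] := pselect (exists j : 'I_N, (N%:R : R) <= cmod (dft j) ^+ 2).
  by exists j.
have : \sum_(j < N) cmod (dft j) ^+ 2 < \sum_(j < N) (N%:R : R).
  apply: ltr_sum; first by apply/hasP; exists (Ordinal N_gt0); rewrite ?mem_index_enum.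
  by move=> j _; rewrite ltNge; apply/negP => Hj; apply: small; exists j.
rewrite parseval_dft; under eq_bigr do rewrite x_unit expr1n.
by rewrite !sumr_const card_ord mulr_natr ltxx.
Qed.

End DiscreteFourier.

Section ExponentialSums.
Context {R : realType}.
Implicit Types (f : nat -> R[i]) (p : {poly R}).

Definition expsum f (M N : nat) p : R[i] := \sum_(n < N) f (n + M)%N * e p.[n%:R].

Definition poly_shift p (s : R) : {poly R} := p \Po ('X + s%:P).

Lemma horner_shift p s x : (poly_shift p s).[x] = p.[x + s].
Proof. by rewrite /poly_shift horner_comp hornerD hornerX hornerC. Qed.

Lemma size_shift p s : size (poly_shift p s) = size p.
Proof. by rewrite /poly_shift size_comp_poly2 // size_XaddC. Qed.

Lemma poly_shiftK s : cancel (poly_shift^~ s) (poly_shift^~ (- s)).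
Proof. by move=> p; rewrite /poly_shift polyCN comp_polyXaddC_K. Qed.

Lemma cmod_avg_sum f M N p :
  cmod (avg_sum f M N p) = N%:R^-1 * cmod (expsum f M N p).
Proof.
rewrite /avg_sum cmodM; congr (_ * _).
by rewrite -(rmorph_nat (real_complex R)) -fmorphV cmod_real // invr_ge0 ler0n.
Qed.

Lemma expsum_cat f M A B p :
  expsum f M (A + B) p = expsum f M A p + expsum f (M + A) B (poly_shift p A%:R).
Proof.
rewrite /expsum big_split_ord /=; congr (_ + _); apply: eq_bigr => n _.
by rewrite horner_shift -natrD [(M + A)%N]addnC addnA [(n + A)%N]addnC.
Qed.

Lemma cmod_expsum_le f M N p : unimodular f -> cmod (expsum f M N p) <= N%:R.
Proof.
move=> f_unit; apply: (le_trans (cmod_sum _ _ _ _)).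
under eq_bigr do rewrite cmodM f_unit cmod_e mulr1.
by rewrite sumr_const card_ord.
Qed.

Lemma expsum_aligned_block (q : nat) f (a k : nat) p : q_multiplicative q f ->
  expsum f (a * q ^ k) (q ^ k) p = f (a * q ^ k)%N * expsum f 0 (q ^ k) p.
Proof.
move=> f_mult; rewrite /expsum mulr_sumr; apply: eq_bigr => n _.
by rewrite addn0 (f_mult k) ?dvdn_mull // mulrA [f n * _]mulrC.
Qed.

Lemma exists_large_linear_expsum f N : unimodular f -> (0 < N)%N ->
  exists2 p : {poly R}, (size p <= 2)%N & N%:R <= cmod (expsum f 0 N p) ^+ 2.
Proof.
move=> f_unit N_gt0.
have [j large] := exists_large_dft N (fun n => f (n + 0)%N) N_gt0 (fun n => f_unit _).
exists ((j%:R / N%:R) *: 'X); first by rewrite (leq_trans (size_scale_leq _ _)) ?size_polyX.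
rewrite /expsum.
by under eq_bigr do rewrite hornerZ hornerX.
Qed.

End ExponentialSums.

Section RealPowers.
Context {R : realType}.
Implicit Types a s : R.

Lemma powR_natrX a s (k : nat) : 0 <= a -> (a `^ s) ^+ k = (a ^+ k) `^ s.
Proof.
move=> a_ge0; rewrite -(powR_mulrn _ (powR_ge0 _ _)) -(powR_mulrn _ a_ge0).
by rewrite -!powRrM mulrC.
Qed.

Lemma mulr_powRN a s : 0 < a -> a * a `^ (- s) = a `^ (1 - s).
Proof.
move=> a_gt0; rewrite powRD ?powRr1 ?ltW //.
by rewrite (gt_eqF a_gt0) implybT.
Qed.

Lemma natrX_powRN (q k : nat) s : ((q ^ k)%:R : R) `^ (- s) = q%:R `^ (- (s * k%:R)).
Proof. by rewrite natrX -powR_natrX // -powR_mulrn ?powR_ge0 // -powRrM mulNr. Qed.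

Lemma powR_gt1 a s : 1 < a -> 0 < s -> 1 < a `^ s.
Proof.
move=> a_gt1 s_gt0; have := gt0_ltr_powR s_gt0 _ _ a_gt1; rewrite powR1; apply.
  by rewrite nnegrE ler01.
by rewrite nnegrE (le_trans ler01 (ltW a_gt1)).
Qed.

End RealPowers.

Section UpperBound.
Context {R : realType}.
Context {q d : nat} {f : nat -> R[i]} {C c : R}.
Hypotheses (q_gt1 : (1 < q)%N) (f_unit : unimodular f) (f_mult : q_multiplicative q f).
Hypotheses (C_ge0 : 0 <= C) (c_lt1 : c < 1).

Local Notation x := (q%:R `^ (1 - c) : R).

Hypothesis block_bound : forall (k : nat) (p : {poly R}), (size p <= d.+1)%N ->
  cmod (expsum f 0 (q ^ k) p) <= C * x ^+ k.

Let q_gt0 : (0 < q)%N. Proof. exact: ltnW. Qed.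

Lemma growth_gt1 : 1 < x.
Proof. by rewrite powR_gt1 ?ltr1n // subr_gt0. Qed.

Lemma cmod_aligned_blocks (b a k : nat) (p : {poly R}) : (size p <= d.+1)%N ->
  cmod (expsum f (a * q ^ k) (b * q ^ k) p) <= b%:R * (C * x ^+ k).
Proof.
elim: b a p => [|b IHb] a p p_small; first by rewrite /expsum big_ord0 cmod0 mul0r.
rewrite mulSn expsum_cat -mulSnr mulrS mulrDl mul1r.
apply: (le_trans (cmodD _ _)); apply: lerD; last by rewrite IHb ?size_shift.
by rewrite expsum_aligned_block // cmodM f_unit mul1r block_bound.
Qed.

Local Notation E := (q%:R * C / (x - 1) + 1).

Lemma E_ge1 : 1 <= E.
Proof. by rewrite lerDr divr_ge0 ?mulr_ge0 // subr_ge0 ltW ?growth_gt1. Qed.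

Lemma E_step : q%:R * C + E <= E * x.
Proof.
have x1_neq0 : x - 1 != 0 by rewrite subr_eq0 gt_eqF ?growth_gt1.
have -> : E * x = q%:R * C + E + (x - 1) by field.
by rewrite lerDl subr_ge0 ltW ?growth_gt1.
Qed.

Lemma cmod_aligned_le {k : nat} {B : R} :
  (forall (a r : nat) (p : {poly R}), (r <= q ^ k)%N -> (size p <= d.+1)%N ->
     cmod (expsum f (a * q ^ k) r p) <= B) ->
  forall (a s : nat) (p : {poly R}), (size p <= d.+1)%N ->
  cmod (expsum f (a * q ^ k) s p) <= (s %/ q ^ k)%:R * (C * x ^+ k) + B.
Proof.
move=> short_bound a s p p_small.
rewrite {1}(divn_eq s (q ^ k)) expsum_cat -mulnDl.
apply: (le_trans (cmodD _ _)); apply: lerD; first exact: cmod_aligned_blocks.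
by rewrite short_bound ?size_shift // ltnW // ltn_pmod // expn_gt0 q_gt0.
Qed.

Lemma cmod_aligned_short (k a r : nat) (p : {poly R}) : (r <= q ^ k)%N ->
  (size p <= d.+1)%N -> cmod (expsum f (a * q ^ k) r p) <= E * x ^+ k.
Proof.
elim: k a r p => [|k IHk] a r p r_small p_small.
  rewrite expr0 mulr1 (le_trans (cmod_expsum_le _ _ _ _ f_unit)) //.
  by rewrite (le_trans _ E_ge1) ?lern1.
rewrite expnS mulnA; apply: (le_trans (cmod_aligned_le IHk (a * q) r p p_small)).
have digits : (r %/ q ^ k <= q)%N.
  by rewrite -[X in (_ <= X)%N](@mulnK q (q ^ k)) ?expn_gt0 ?q_gt0 // leq_div2r -?expnS.
apply: (@le_trans _ _ (q%:R * (C * x ^+ k) + E * x ^+ k)).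
  by rewrite lerD2r ler_wpM2r ?mulr_ge0 ?ler_nat.
by rewrite mulrA -mulrDl exprS mulrA ler_wpM2r // E_step.
Qed.

Lemma cmod_expsum_bound (M N : nat) (p : {poly R}) : (0 < N)%N -> (size p <= d.+1)%N ->
  cmod (expsum f M N p) <= (q%:R * C + 2 * E) * x ^+ trunc_log q N.
Proof.
move=> N_gt0 p_small; have [QN NQ] := andP (trunc_log_bounds q_gt1 N_gt0).
set k := trunc_log q N in QN NQ *; set Q := (q ^ k)%N in QN NQ *.
have Q_gt0 : (0 < Q)%N by rewrite expn_gt0 q_gt0.
set a := (M %/ Q)%N; set r := (M %% Q)%N.
have r_lt : (r < Q)%N by rewrite ltn_pmod.
set p' := poly_shift p (- r%:R).
have p'_small : (size p' <= d.+1)%N by rewrite size_shift.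
have -> : expsum f M N p = expsum f (a * Q) (r + N) p' - expsum f (a * Q) r p'.
  have shiftK : poly_shift p' r%:R = p by rewrite -[r%:R]opprK poly_shiftK.
  by rewrite expsum_cat addrAC subrr add0r -divn_eq shiftK.
have digits : ((r + N) %/ Q <= q)%N.
  rewrite -ltnS ltn_divLR // mulSn; rewrite expnS in NQ; lia.
apply: (le_trans (cmodD _ _)); rewrite cmodN.
have whole := cmod_aligned_le (cmod_aligned_short k) a (r + N) p' p'_small.
have rest := cmod_aligned_short k a r p' (ltnW r_lt) p'_small.
have : ((r + N) %/ Q)%:R * (C * x ^+ k) <= q%:R * (C * x ^+ k).
  by rewrite ler_wpM2r ?mulr_ge0 ?ler_nat.
lra.
Qed.

Lemma cmod_avg_sum_decay (M N : nat) (p : {poly R}) : (0 < N)%N -> (size p <= d.+1)%N ->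
  cmod (avg_sum f M N p) <= (q%:R * C + 2 * E) * N%:R `^ (- c).
Proof.
move=> N_gt0 p_small; have N_pos : (0 : R) < N%:R by rewrite ltr0n.
have growth_le : x ^+ trunc_log q N <= N%:R `^ (1 - c).
  rewrite powR_natrX ?ler0n // ge0_ler_powR ?nnegrE ?exprn_ge0 ?subr_ge0 ?(ltW c_lt1) //.
  by rewrite -natrX ler_nat trunc_logP.
rewrite cmod_avg_sum -[N%:R `^ _](mulKf (lt0r_neq0 N_pos)) mulr_powRN // mulrCA.
rewrite ler_wpM2l ?invr_ge0 ?ler0n // (le_trans (cmod_expsum_bound M N p N_gt0 p_small)) //.
by rewrite ler_wpM2l // addr_ge0 ?mulr_ge0 // (le_trans ler01 E_ge1).
Qed.

End UpperBound.

Lemma expsum_block_decay {R : realType} {q d : nat} {f : nat -> R[i]} {C c : R} :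
  (0 < q)%N ->
  (forall (L : nat) (p : {poly R}), (size p <= d.+1)%N ->
     cmod (avg_sum f 0 (q ^ L) p) <= C * q%:R `^ (- (c * L%:R))) ->
  forall (k : nat) (p : {poly R}), (size p <= d.+1)%N ->
  cmod (expsum f 0 (q ^ k) p) <= C * (q%:R `^ (1 - c)) ^+ k.
Proof.
move=> q_gt0 avg_decay k p p_small; have Q_pos : (0 : R) < (q ^ k)%N%:R.
  by rewrite ltr0n expn_gt0 q_gt0.
rewrite -[cmod _](mulVKf (lt0r_neq0 Q_pos)) -cmod_avg_sum powR_natrX ?ler0n //.
rewrite -natrX -mulr_powRN // natrX_powRN mulrCA ler_wpM2l ?ler0n //.
exact: avg_decay.
Qed.

Lemma decay_constant_ge0 {R : realType} {q d : nat} {f : nat -> R[i]} {C y : R} :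
  (forall (k : nat) (p : {poly R}), (size p <= d.+1)%N ->
     cmod (expsum f 0 (q ^ k) p) <= C * y ^+ k) ->
  0 <= C.
Proof.
move=> decay; have := decay 0 0; rewrite size_poly0 expr0 mulr1 => /(_ isT).
exact: le_trans (cmod_ge0 _).
Qed.

Lemma decay_exponent_lt1 {R : realType} {q d : nat} {f : nat -> R[i]} {C c : R} :
  (1 < q)%N -> (1 <= d)%N -> unimodular f ->
  (forall (k : nat) (p : {poly R}), (size p <= d.+1)%N ->
     cmod (expsum f 0 (q ^ k) p) <= C * (q%:R `^ (1 - c)) ^+ k) ->
  c < 1.
Proof.
move=> q_gt1 d_ge1 f_unit decay; rewrite ltNge; apply/negP => c_ge1.
have C_ge0 := decay_constant_ge0 decay.
have bounded (k : nat) : ((q ^ k)%N%:R : R) <= C ^+ 2.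
  have Q_gt0 : (0 < q ^ k)%N by rewrite expn_gt0 (ltnW q_gt1).
  have [p p_lin large] := exists_large_linear_expsum _ _ f_unit Q_gt0.
  have small : cmod (expsum f 0 (q ^ k) p) <= C.
    have p_small : (size p <= d.+1)%N by rewrite (leq_trans p_lin).
    apply: (le_trans (decay k p p_small)).
    rewrite ler_piMr // exprn_ile1 ?powR_ge0 //.
    by rewrite -[X in _ <= X](powRr0 q%:R) ler_powR ?ler1n ?(ltnW q_gt1) // subr_le0.
  apply: (le_trans large); rewrite lerXn2r ?nnegrE ?cmod_ge0 //.
have := archi_boundP (sqr_ge0 C); set n := Num.Def.archi_bound _ => C2_lt.
have := le_lt_trans (bounded n) C2_lt; rewrite ltr_nat ltnNge => /negP; apply.
exact: ltnW (ltn_expl n q_gt1).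
Qed.

Theorem lemmaA1 (R : realType) (q d : nat) (f : nat -> R[i]) (c : R) :
  (2 <= q)%N -> (1 <= d)%N -> unimodular f -> q_multiplicative q f -> 0 < c ->
  (exists C : R, forall (L : nat) (p : {poly R}), (size p <= d.+1)%N ->
      cmod (avg_sum f 0 (q ^ L) p) <= C * (q%:R `^ (- (c * L%:R)))) <->
  (exists C : R, forall (M N : nat) (p : {poly R}), (1 <= N)%N -> (size p <= d.+1)%N ->
      cmod (avg_sum f M N p) <= C * (N%:R `^ (- c))).
Proof.
move=> q_gt1 d_ge1 f_unit f_mult _; split=> [[C avg_decay]|[C decay]].
  have block := expsum_block_decay (ltnW q_gt1) avg_decay.
  have C_ge0 := decay_constant_ge0 block.
  have c_lt1 := decay_exponent_lt1 q_gt1 d_ge1 f_unit block.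
  eexists => M N p N_gt0 p_small.
  exact: cmod_avg_sum_decay q_gt1 f_unit f_mult C_ge0 c_lt1 block M N p N_gt0 p_small.
exists C => L p p_small; rewrite -natrX_powRN.
by apply: decay; rewrite // expn_gt0 (ltnW q_gt1).
Qed.
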